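(* Let $m\ge2$ and let $\mathbb N$ be the directed cycle $1\to2\to\cdots\to m\to1$, where agent $i$ receives $C_ix_{i-1}$ from agent $i-1$ (vertex $0$ being vertex $m$, $x_0:=x_m$), each $C_i$ a real full-row-rank matrix with $n$ columns, and $P_i=C_i'(C_iC_i')^{-1}C_i$. Assume $\bar{\mathbb N}$ is well-configured, i.e. for all $x_1,\dots,x_m\in\mathbb R^n$, $C_ix_i=C_ix_{i-1}$ for all $i$ implies $x_1=\cdots=x_m$. Then for arbitrary initial states $x_i(0)\in\mathbb R^n$, the iteration $$x_i(t+1)=x_i(t)-\tfrac12P_i\big(x_i(t)-x_{i-1}(t)\big),\qquad i=1,\dots,m,$$ makes all $x_i(t)$ converge to a common vector $x^*\in\mathbb R^n$ exponentially fast.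
   Context: $'$ denotes transpose; $P_i$ is the orthogonal projection onto $(\ker C_i)^\perp$. Exponentially fast: there exist $c>0$, $\rho\in[0,1)$ with $\|x_i(t)-x^*\|\le c\rho^t$ for all $i,t$. *)

From HB Require Import structures.
From mathcomp Require Import all_boot all_order all_algebra.
From mathcomp Require Import reals.
Set Implicit Arguments. Unset Strict Implicit. Unset Printing Implicit Defensive.
Import Order.TTheory GRing.Theory Num.Theory.
Local Open Scope ring_scope.

(* Agents are indexed by 'I_m; agent k (0-based) is the paper's agent k+1.
   The cyclic predecessor of k is ord_pred k (predecessor of 0 is m-1),
   matching the paper's convention "vertex 0 is vertex m". *)
Definition prev {m : nat} (i : 'I_m) : 'I_m := ord_pred i.

Definition proj_ker_perp {R : realType} {r n : nat} (C : 'M[R]_(r, n)) : 'M[R]_n :=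
  C^T *m invmx (C *m C^T) *m C.

Definition well_configured {R : realType} {m n : nat} (r : 'I_m -> nat)
  (C : forall i : 'I_m, 'M[R]_(r i, n)) : Prop :=
  forall x : 'I_m -> 'cV[R]_n,
    (forall i, C i *m x i = C i *m x (prev i)) -> forall i j, x i = x j.

Fixpoint traj {R : realType} {m n : nat} (r : 'I_m -> nat)
  (C : forall i : 'I_m, 'M[R]_(r i, n)) (x0 : 'I_m -> 'cV[R]_n) (t : nat)
  : 'I_m -> 'cV[R]_n :=
  match t with
  | 0 => x0
  | t'.+1 => let x := traj C x0 t' in
      fun i => x i - 2^-1 *: (proj_ker_perp (C i) *m (x i - x (prev i)))
  end.

From Pilot Require Import Defs.
From HB Require Import structures.
From mathcomp Require Import all_boot all_order all_algebra.
From mathcomp Require Import reals.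
From mathcomp Require Import classical_sets.
From mathcomp.algebra_tactics Require Import ring lra.
Set Implicit Arguments. Unset Strict Implicit. Unset Printing Implicit Defensive.
Import Order.TTheory Order.NatMonotonyTheory GRing.Theory Num.Theory.
Local Open Scope ring_scope.

(* The increments [d_i(t) = x_i(t+1) - x_i(t)] follow the same linear recursion and
   stay in the subspace of families [u] with [P_i u_i = u_i] and [sum_i u_i]
   orthogonal to every [c] fixed by all [P_i].  One step lowers the energy
   [sum_i |u_i|^2] by at least an eighth of the disagreement
   [sum_i |u_i - u_(i-1)|^2], and on that subspace the energy is at most a constant
   times the disagreement (finite-dimensional coercivity), so the energy of the
   increments decays geometrically.  Hence each [x_i(t)] converges geometrically to
   some [y_i]; passing to the limit in [C_i x_i(t+1) = C_i (x_i(t) + x_(i-1)(t)) / 2]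
   gives [C_i y_i = C_i y_(i-1)], and well-configuredness makes all [y_i] equal. *)

Section InnerProduct.
Variable R : realFieldType.

Definition dot n (u v : 'cV[R]_n) : R := \sum_k u k 0 * v k 0.
Definition sqnorm n (u : 'cV[R]_n) : R := dot u u.

Section FixedDimension.
Variable n : nat.
Implicit Types u v w : 'cV[R]_n.

Lemma dotC u v : dot u v = dot v u.
Proof. by apply: eq_bigr => k _; rewrite mulrC. Qed.

Lemma dotDl u v w : dot (u + v) w = dot u w + dot v w.
Proof. by rewrite /dot -big_split; apply: eq_bigr => k _; rewrite mxE mulrDl. Qed.

Lemma dotNl u w : dot (- u) w = - dot u w.
Proof. by rewrite /dot -sumrN; apply: eq_bigr => k _; rewrite mxE mulNr. Qed.

Lemma dotBl u v w : dot (u - v) w = dot u w - dot v w.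
Proof. by rewrite dotDl dotNl. Qed.

Lemma dotZl a u w : dot (a *: u) w = a * dot u w.
Proof. by rewrite /dot mulr_sumr; apply: eq_bigr => k _; rewrite mxE mulrA. Qed.

Lemma dotDr u v w : dot w (u + v) = dot w u + dot w v.
Proof. by rewrite dotC dotDl !(dotC w). Qed.

Lemma dotBr u v w : dot w (u - v) = dot w u - dot w v.
Proof. by rewrite dotC dotBl !(dotC w). Qed.

Lemma dotZr a u w : dot w (a *: u) = a * dot w u.
Proof. by rewrite dotC dotZl dotC. Qed.

Lemma dot0r w : dot w 0 = 0.
Proof. by rewrite /dot big1 // => k _; rewrite mxE mulr0. Qed.

Lemma dot_sumr (I : finType) (F : I -> 'cV[R]_n) w :
  dot w (\sum_i F i) = \sum_i dot w (F i).
Proof.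
rewrite /dot exchange_big /=; apply: eq_bigr => k _.
by rewrite summxE mulr_sumr.
Qed.

Lemma sqnorm_ge0 u : 0 <= sqnorm u.
Proof. by apply: sumr_ge0 => k _; rewrite -expr2 sqr_ge0. Qed.

Lemma sqnorm_eq0 u : sqnorm u = 0 -> u = 0.
Proof.
move=> /eqP; rewrite psumr_eq0 => [/allP u0|k _]; last by rewrite -expr2 sqr_ge0.
apply/matrixP => k l; rewrite (ord1 l) mxE.
by move: (u0 k (mem_index_enum k)); rewrite mulf_eq0 orbb => /eqP.
Qed.

Lemma sqr_entry_le_sqnorm u k : u k 0 ^+ 2 <= sqnorm u.
Proof.
rewrite /sqnorm /dot (bigD1 k) //= -expr2 lerDl.
by apply: sumr_ge0 => j _; rewrite -expr2 sqr_ge0.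
Qed.

Lemma sqnormD u v : sqnorm (u + v) = sqnorm u + 2 * dot u v + sqnorm v.
Proof. rewrite /sqnorm dotDl !dotDr (dotC v u); ring. Qed.

Lemma sqnormB u v : sqnorm (u - v) = sqnorm u - 2 * dot u v + sqnorm v.
Proof. rewrite /sqnorm dotBl !dotBr (dotC v u); ring. Qed.

Lemma sqnormN u : sqnorm (- u) = sqnorm u.
Proof. by rewrite /sqnorm dotNl dotC dotNl opprK. Qed.

Lemma sqnormZ a u : sqnorm (a *: u) = a ^+ 2 * sqnorm u.
Proof. rewrite /sqnorm dotZl dotZr; ring. Qed.

Lemma sqnormD_le u v : sqnorm (u + v) <= 2 * sqnorm u + 2 * sqnorm v.
Proof. have := sqnorm_ge0 (u - v); rewrite sqnormB sqnormD; lra. Qed.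

Lemma sqnormB_le u v : sqnorm (u - v) <= 2 * sqnorm u + 2 * sqnorm v.
Proof. by have := sqnormD_le u (- v); rewrite sqnormN. Qed.

End FixedDimension.

Lemma dot_mulmxl p q (A : 'M[R]_(p, q)) u v : dot (A *m u) v = dot u (A^T *m v).
Proof.
rewrite /dot; under eq_bigr do rewrite mxE big_distrl /=.
rewrite exchange_big /=; apply: eq_bigr => j _.
rewrite mxE mulr_sumr; apply: eq_bigr => k _.
by rewrite mxE mulrCA mulrA.
Qed.

Lemma sqr_sum_le (I : finType) (a : I -> R) :
  (\sum_i a i) ^+ 2 <= #|I|%:R * \sum_i a i ^+ 2.
Proof.
have sum_const x : \sum_(i : I) x = #|I|%:R * x.
  by rewrite sumr_const mulr_natl; congr (_ *+ _); apply: eq_card.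
rewrite expr2 mulr_suml.
under eq_bigr do rewrite mulr_sumr.
(* 2 a_i a_j <= a_i^2 + a_j^2 *)
apply: (@le_trans _ _ (\sum_i \sum_j (2^-1 * a i ^+ 2 + 2^-1 * a j ^+ 2))).
  apply: ler_sum => i _; apply: ler_sum => j _.
  have := sqr_ge0 (a i - a j); lra.
under eq_bigr do rewrite big_split /= sum_const.
rewrite big_split /= sum_const -!mulr_sumr; lra.
Qed.

Lemma sqnorm_sum_le n (I : finType) (F : I -> 'cV[R]_n) :
  sqnorm (\sum_i F i) <= #|I|%:R * \sum_i sqnorm (F i).
Proof.
rewrite /sqnorm /dot; under eq_bigr do rewrite summxE -expr2.
apply: (@le_trans _ _ (\sum_k #|I|%:R * \sum_i F i k 0 ^+ 2)).
  by apply: ler_sum => k _; apply: sqr_sum_le.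
rewrite -mulr_sumr exchange_big /=; apply: ler_wpM2l; first by rewrite ler0n.
by apply: ler_sum => i _; apply: ler_sum => k _; rewrite expr2.
Qed.

Definition mxsqbound p q (A : 'M[R]_(p, q)) : R := q%:R * \sum_i \sum_j A i j ^+ 2.

Lemma mxsqbound_ge0 p q (A : 'M[R]_(p, q)) : 0 <= mxsqbound A.
Proof.
apply: mulr_ge0; first by rewrite ler0n.
by apply: sumr_ge0 => i _; apply: sumr_ge0 => j _; apply: sqr_ge0.
Qed.

Lemma sqnorm_mulmx_le p q (A : 'M[R]_(p, q)) u :
  sqnorm (A *m u) <= mxsqbound A * sqnorm u.
Proof.
rewrite /mxsqbound -mulrA mulr_suml mulr_sumr; apply: ler_sum => i _.
rewrite /sqnorm /dot mxE -expr2.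
apply: le_trans (sqr_sum_le _) _; rewrite card_ord.
apply: ler_wpM2l; first by rewrite ler0n.
rewrite mulr_suml; apply: ler_sum => j _.
rewrite exprMn; apply: ler_wpM2l; first exact: sqr_ge0.
exact: sqr_entry_le_sqnorm.
Qed.

Lemma mulmx_tr_eq0 p q (A : 'M[R]_(p, q)) : A *m A^T = 0 -> A = 0.
Proof.
move=> AAt0; apply/matrixP => i j; rewrite mxE.
have rowE : sqnorm (row i A)^T = (A *m A^T) i i.
  by rewrite mxE; apply: eq_bigr => k _; rewrite !mxE.
have /sqnorm_eq0/matrixP/(_ j 0) : sqnorm (row i A)^T = 0 by rewrite rowE AAt0 mxE.
by rewrite !mxE.
Qed.

End InnerProduct.

Section SymmetricProjection.
Variables (R : realFieldType) (n : nat) (P : 'M[R]_n).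
Hypotheses (P_sym : P^T = P) (P_idem : P *m P = P).
Implicit Types u v w : 'cV[R]_n.

Lemma dot_symmx u v : dot (P *m u) v = dot u (P *m v).
Proof. by rewrite dot_mulmxl P_sym. Qed.

Lemma sqnorm_proj u : sqnorm u = sqnorm (P *m u) + sqnorm (u - P *m u).
Proof.
have PuPu : dot (P *m u) (P *m u) = dot u (P *m u) by rewrite dot_symmx mulmxA P_idem.
by rewrite sqnormB /sqnorm PuPu; ring.
Qed.

Lemma sqnorm_proj_le u : sqnorm (P *m u) <= sqnorm u.
Proof. by rewrite [leRHS]sqnorm_proj lerDl sqnorm_ge0. Qed.

Lemma sqnorm_proj_compl_le u : sqnorm ((1%:M - P) *m u) <= sqnorm u.
Proof. by rewrite mulmxBl mul1mx [leRHS]sqnorm_proj lerDr sqnorm_ge0. Qed.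

(* For [a] in the range of [P] the step is [(a + P w) / 2], and the slack of the
   inequality is [|a - P w|^2 / 8 + 3 (|w|^2 - |P w|^2) / 8]. *)
Lemma sqnorm_half_step_le a w : P *m a = a ->
  sqnorm (a - 2^-1 *: (P *m (a - w))) <=
    2^-1 * sqnorm a + 2^-1 * sqnorm w - 8^-1 * sqnorm (a - w).
Proof.
move=> Pa.
have -> : a - 2^-1 *: (P *m (a - w)) = 2^-1 *: a + 2^-1 *: (P *m w).
  rewrite mulmxBr Pa scalerBr opprB addrA addrAC; congr (_ + _).
  by rewrite -{1}(scale1r a) -scalerBl; congr (_ *: _); field.
have aPw : dot a (P *m w) = dot a w by rewrite -dot_symmx Pa.
rewrite sqnormD !sqnormZ dotZl dotZr aPw sqnormB.
have := sqnorm_proj_le w; have := sqnorm_ge0 (a - P *m w).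
rewrite sqnormB aPw; lra.
Qed.

End SymmetricProjection.

Section ProjKerPerp.
Variables (R : realType) (r n : nat) (C : 'M[R]_(r, n)).

Lemma proj_ker_perp_tr : (proj_ker_perp C)^T = proj_ker_perp C.
Proof. by rewrite !trmx_mul trmxK trmx_inv trmx_mul trmxK mulmxA. Qed.

Hypothesis C_free : row_free C.

Lemma mulmx_tr_unit : C *m C^T \in unitmx.
Proof.
rewrite -row_free_unit; apply: inj_row_free => v vCCt0.
apply: (row_free_inj C_free); rewrite mul0mx; apply: mulmx_tr_eq0.
by rewrite trmx_mul mulmxA -(mulmxA v) vCCt0 mul0mx.
Qed.

Lemma mulmx_proj_ker_perp : C *m proj_ker_perp C = C.
Proof. by rewrite !mulmxA mulmxV ?mulmx_tr_unit // mul1mx. Qed.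

Lemma proj_ker_perp_idem : proj_ker_perp C *m proj_ker_perp C = proj_ker_perp C.
Proof. by rewrite {1}/proj_ker_perp -mulmxA mulmx_proj_ker_perp. Qed.

End ProjKerPerp.

Section Coercivity.
Variable R : realFieldType.

Lemma tr_sub_mulmx_tr p q (M : 'M[R]_(q, p)) : (M^T <= M *m M^T)%MS.
Proof.
have [_ <-] := mxrank_leqif_sup (submxMl M M^T); apply/eqP.
have capK0 : (M :&: kermx M^T)%MS = 0.
  apply: mulmx_tr_eq0.
  have /sub_kermxP KMt0 := capmxSr M (kermx M^T).
  have /submxP[Y capE] := capmxSl M (kermx M^T).
  by rewrite {2}capE trmx_mul mulmxA KMt0 mul0mx.
by rewrite mxrank_tr -(mxrank_mul_ker M M^T) capK0 mxrank0 addn0.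
Qed.

Lemma ker_orth_coercive p q (M : 'M[R]_(q, p)) :
  exists K : R, 0 <= K /\ forall x : 'cV[R]_p,
    (forall k, M *m k = 0 -> dot k x = 0) -> sqnorm x <= K * sqnorm (M *m x).
Proof.
have [Y MMtYM] : exists Y : 'M_q, M *m M^T *m Y *m M = M.
  exists (pinvmx (M *m M^T))^T.
  have /(congr1 trmx) := mulmxKpV (tr_sub_mulmx_tr M).
  by set X := pinvmx _; rewrite !trmx_mul !trmxK !mulmxA.
exists (mxsqbound (M^T *m Y)); split=> [|x x_orth]; first exact: mxsqbound_ge0.
suff {1}-> : x = M^T *m Y *m (M *m x) by apply: sqnorm_mulmx_le.
apply/eqP; rewrite -subr_eq0; apply/eqP/sqnorm_eq0.
have ker_e : M *m (x - M^T *m Y *m (M *m x)) = 0.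
  by rewrite mulmxBr !mulmxA MMtYM subrr.
(* [x - M^T Y M x] lies in [ker M], which is orthogonal to [x] and to the range of [M^T]. *)
rewrite /sqnorm dotBr x_orth //; set k := x - _.
by rewrite -!mulmxA dotC dot_mulmxl trmxK ker_e dot0r subrr.
Qed.

Lemma ker_orth_coercive_family (I : finType) p (s : I -> nat)
    (M : forall i, 'M[R]_(s i, p)) :
  exists K : R, 0 <= K /\ forall x : 'cV[R]_p,
    (forall k, (forall i, M i *m k = 0) -> dot k x = 0) ->
    sqnorm x <= K * \sum_i sqnorm (M i *m x).
Proof.
pose H := \sum_i (M i)^T *m M i.
have [K [K_ge0 HK]] := ker_orth_coercive H.
have H_quad k : dot k (H *m k) = \sum_i sqnorm (M i *m k).
  rewrite /H mulmx_suml dot_sumr; apply: eq_bigr => i _.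
  by rewrite -mulmxA dotC dot_mulmxl trmxK.
pose S := \sum_i mxsqbound (M i)^T.
have S_ge0 : 0 <= S by apply: sumr_ge0 => i _; apply: mxsqbound_ge0.
exists (K * (#|I|%:R * S)); split=> [|x x_orth].
  by rewrite mulr_ge0 // mulr_ge0 ?ler0n.
have {}x_orth k : H *m k = 0 -> dot k x = 0.
  move=> Hk0; apply: x_orth => i; apply: sqnorm_eq0; apply/eqP.
  have /eqP := H_quad k; rewrite Hk0 dot0r eq_sym psumr_eq0 => [|j _].
    by move=> /allP/(_ i (mem_index_enum i)).
  exact: sqnorm_ge0.
apply: le_trans (HK x x_orth) _; rewrite -mulrA; apply: ler_wpM2l => //.
rewrite /H mulmx_suml -mulrA; apply: le_trans (sqnorm_sum_le _) _.
apply: ler_wpM2l; first by rewrite ler0n.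
rewrite /S mulr_suml; apply: ler_sum => i _.
rewrite -mulmxA; apply: le_trans (sqnorm_mulmx_le _ _) _.
apply: ler_wpM2l; first exact: mxsqbound_ge0.
by rewrite (bigD1 i) //= lerDl; apply: sumr_ge0 => j _; apply: sqnorm_ge0.
Qed.

End Coercivity.

Section GeometricSequences.
Variable R : realType.

Lemma bernoulli_ineq (h : R) t : 0 <= h -> 1 + t%:R * h <= (1 + h) ^+ t.
Proof.
move=> h_ge0; elim: t => [|t IH]; first by rewrite expr0 mul0r addr0.
rewrite exprS -natr1 mulrDl mul1r.
have := mulr_ge0 (ler0n R t) h_ge0; have := ler_wpM2l (_ : 0 <= 1 + h) IH.
nra.
Qed.

Lemma geometric_bound_eq0 (z K q : R) : 0 <= q -> q < 1 ->
  (forall t, `|z| <= K * q ^+ t) -> z = 0.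
Proof.
move=> q_ge0 q_lt1 zK; apply/normr0_eq0/eqP; rewrite eq_le normr_ge0 andbT.
have [q0|q_neq0] := eqVneq q 0; first by have := zK 1%N; rewrite q0 expr1 mulr0.
have q_gt0 : 0 < q by rewrite lt_def q_neq0.
rewrite leNgt; apply/negP => z_gt0.
(* [|z| (1 + t h) <= |z| q^-t <= K] with [h = q^-1 - 1 > 0] fails for large [t]. *)
pose h := q^-1 - 1.
have h_gt0 : 0 < h by rewrite subr_gt0 invf_gt1.
have K_ge0 : 0 <= K by have := zK 0%N; rewrite expr0 mulr1; apply: le_trans.
have hz_gt0 : 0 < h * `|z| by rewrite mulr_gt0.
pose t := Num.bound (K / (h * `|z|)).
have t_large : K < t%:R * (h * `|z|).
  by rewrite -ltr_pdivrMr // archi_boundP // divr_ge0 // ltW.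
have : `|z| * (1 + t%:R * h) <= K.
  apply: le_trans (_ : `|z| * (q^-1) ^+ t <= K).
    have -> : q^-1 = 1 + h by rewrite /h addrC subrK.
    by rewrite ler_wpM2l // bernoulli_ineq // ltW.
  rewrite -(ler_pM2r (exprn_gt0 t q_gt0)) -mulrA -exprMn mulVf // expr1n mulr1.
  exact: zK.
nra.
Qed.

Lemma geometric_cauchy_limit (a : nat -> R) (K q : R) : 0 <= q -> q < 1 ->
  (forall t, `|a t.+1 - a t| <= K * q ^+ t) ->
  exists l, forall t, `|a t - l| <= K / (1 - q) * q ^+ t.
Proof.
move=> q_ge0 q_lt1 da; set c := K / (1 - q).
have K_ge0 : 0 <= K by have := da 0%N; rewrite expr0 mulr1; apply: le_trans.
have c_ge0 : 0 <= c by rewrite divr_ge0 // subr_ge0 ltW.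
have cq_ge0 t : 0 <= c * q ^+ t by rewrite mulr_ge0 ?exprn_ge0.
have cqS t : c * q ^+ t.+1 = c * q ^+ t - K * q ^+ t.
  by rewrite /c exprS; field; rewrite subr_eq0 eq_sym lt_eqF.
(* [a] stays in the nested intervals [[a t - c q^t, a t + c q^t]]. *)
pose b t := a t - c * q ^+ t.
pose e t := a t + c * q ^+ t.
have b_nondec : {homo b : t s / (t <= s)%N >-> t <= s}.
  by apply: nondecnP => t; have := da t; rewrite ler_norml /b cqS => /andP[]; lra.
have e_noninc t s : (t <= s)%N -> e s <= e t.
  by apply: nonincnP => {}t; have := da t; rewrite ler_norml /e cqS => /andP[]; lra.
have b_le_e t s : b t <= e s.
  have b_le_e_diag u : b u <= e u by rewrite /b /e; have := cq_ge0 u; lra.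
  case: (leqP t s) => [ts|/ltnW st].
    exact: le_trans (b_nondec _ _ ts) (b_le_e_diag s).
  exact: le_trans (b_le_e_diag t) (e_noninc _ _ st).
exists (sup (range b)) => t.
have b_le_sup : b t <= sup (range b).
  by apply: ub_le_sup; [exists (e 0%N) => _ [s _ <-]; apply: b_le_e | exists t].
have sup_le_e : sup (range b) <= e t.
  by apply: ge_sup; [exists (b 0%N), 0%N | move=> _ [s _ <-]; apply: b_le_e].
by rewrite ler_norml; move: b_le_sup sup_le_e; rewrite /b /e; lra.
Qed.

Lemma geometric_cauchy_limit_fin (I : finType) (a : nat -> I -> R) (K q : R) :
  0 <= q -> q < 1 -> (forall t i, `|a t.+1 i - a t i| <= K * q ^+ t) ->
  exists l : I -> R, forall t i, `|a t i - l i| <= K / (1 - q) * q ^+ t.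
Proof.
move=> q_ge0 q_lt1 da.
have /fin_all_exists[l al] i : exists l, forall t, `|a t i - l| <= K / (1 - q) * q ^+ t.
  by apply: geometric_cauchy_limit => // t; apply: da.
by exists l => t i; apply: al.
Qed.

Lemma norm_le_of_sqr_le (x y E : R) : 0 <= E -> 0 <= y ->
  x ^+ 2 <= E * y ^+ 2 -> `|x| <= (1 + E) * y.
Proof.
move=> E_ge0 y_ge0 xE; rewrite -ler_sqr ?nnegrE ?mulr_ge0 ?addr_ge0 //.
rewrite real_normK ?num_real // exprMn; apply: le_trans xE _.
by rewrite ler_wpM2r ?sqr_ge0 // expr2; nra.
Qed.

Lemma geometric_mulmx_eq0 p q (A : 'M[R]_(p, q)) (w : nat -> 'cV[R]_q) z K rho :
  0 <= rho -> rho < 1 -> (forall t k, `|w t k 0| <= K * rho ^+ t) ->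
  (forall t, A *m w t = z) -> z = 0.
Proof.
move=> rho_ge0 rho_lt1 wK Awz; apply/matrixP => i j; rewrite (ord1 j) mxE.
apply: (@geometric_bound_eq0 _ ((\sum_k `|A i k|) * K) rho) => // t.
rewrite -(Awz t) mxE -mulrA mulr_suml; apply: le_trans (ler_norm_sum _ _ _) _.
by apply: ler_sum => k _; rewrite normrM ler_wpM2l.
Qed.

End GeometricSequences.

Lemma subrACA (V : zmodType) (a b c d : V) : (a - b) - (c - d) = (a - c) - (b - d).
Proof. by rewrite !opprB addrACA [RHS]addrACA (addrC (- c)). Qed.

Section CyclicConsensus.
Variables (R : realType) (m n : nat) (r : 'I_m.+1 -> nat).
Variable C : forall i : 'I_m.+1, 'M[R]_(r i, n).
Hypothesis C_free : forall i, row_free (C i).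

Local Notation P i := (proj_ker_perp (C i)).
Local Notation N := ((m.+1)%:R : R).
Implicit Types (x u : 'I_m.+1 -> 'cV[R]_n) (i j : 'I_m.+1).

Definition step x i : 'cV[R]_n := x i - 2^-1 *: (P i *m (x i - x (Defs.prev i))).

Definition energy u : R := \sum_i sqnorm (u i).

Definition disagreement u : R := \sum_i sqnorm (u i - u (Defs.prev i)).

Definition in_ranges u : Prop := forall i, P i *m u i = u i.

Definition admissible u : Prop := in_ranges u /\
  forall c, (forall i, P i *m c = c) -> dot c (\sum_i u i) = 0.

Lemma P_sym i : (P i)^T = P i.
Proof. exact: proj_ker_perp_tr. Qed.

Lemma P_idem i : P i *m P i = P i.
Proof. exact: proj_ker_perp_idem. Qed.

Lemma sum_prev (F : 'I_m.+1 -> R) : \sum_i F (Defs.prev i) = \sum_i F i.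
Proof. by rewrite [RHS](reindex_inj (@ord_pred_inj _)). Qed.

Lemma step_ext x u i : (forall j, x j = u j) -> step x i = step u i.
Proof. by move=> xu; rewrite /step !xu. Qed.

Lemma stepB x u i : step x i - step u i = step (fun j => x j - u j) i.
Proof. by rewrite /step subrACA -scalerBr -mulmxBr subrACA. Qed.

Lemma mulmx_step x i : C i *m (2 *: step x i) = C i *m (x i + x (Defs.prev i)).
Proof.
rewrite /step scalerBr scalerA mulfV ?pnatr_eq0 // scale1r mulmxBr mulmxA.
rewrite mulmx_proj_ker_perp // -mulmxBr; congr (_ *m _).
by rewrite scaler_nat mulr2n opprB addrA addrAC addrK.
Qed.

Lemma energy_ge0 u : 0 <= energy u.
Proof. by apply: sumr_ge0 => i _; apply: sqnorm_ge0. Qed.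

Lemma disagreement_ge0 u : 0 <= disagreement u.
Proof. by apply: sumr_ge0 => i _; apply: sqnorm_ge0. Qed.

Lemma sqnorm_le_energy u i : sqnorm (u i) <= energy u.
Proof.
by rewrite /energy (bigD1 i) //= lerDl sumr_ge0 // => j _; apply: sqnorm_ge0.
Qed.

Lemma sqnorm_le_disagreement u i :
  sqnorm (u i - u (Defs.prev i)) <= disagreement u.
Proof.
by rewrite /disagreement (bigD1 i) //= lerDl sumr_ge0 // => j _; apply: sqnorm_ge0.
Qed.

Lemma energy_step_le u : in_ranges u ->
  energy (step u) <= energy u - 8^-1 * disagreement u.
Proof.
move=> u_rng; rewrite /energy /disagreement.
apply: le_trans (_ : \sum_i (2^-1 * sqnorm (u i) + 2^-1 * sqnorm (u (Defs.prev i))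
                        - 8^-1 * sqnorm (u i - u (Defs.prev i))) <= _).
  apply: ler_sum => i _.
  by apply: sqnorm_half_step_le; [apply: P_sym | apply: P_idem | apply: u_rng].
rewrite !big_split /= sumrN -!mulr_sumr (sum_prev (fun i => sqnorm (u i))); lra.
Qed.

Lemma in_ranges_step u : in_ranges u -> in_ranges (step u).
Proof. by move=> u_rng i; rewrite /step mulmxBr u_rng -scalemxAr mulmxA P_idem. Qed.

(* [P i] is symmetric and fixes [c], so the sum telescopes around the cycle. *)
Lemma dot_fixed_sum_cycle c v : (forall i, P i *m c = c) ->
  \sum_i dot c (P i *m (v i - v (Defs.prev i))) = 0.
Proof.
move=> c_fix; under eq_bigr => i _ do rewrite -(dot_symmx (P_sym i)) c_fix dotBr.
by rewrite sumrB (sum_prev (fun i => dot c (v i))) subrr.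
Qed.

Lemma admissible_step u : admissible u -> admissible (step u).
Proof.
move=> [u_rng u_orth]; split=> [|c c_fix]; first exact: in_ranges_step.
rewrite dot_sumr; under eq_bigr do rewrite dotBr dotZr.
by rewrite sumrB -mulr_sumr dot_fixed_sum_cycle // mulr0 subr0 -dot_sumr u_orth.
Qed.

Lemma admissible_increment x : admissible (fun i => step x i - x i).
Proof.
have incrE i : step x i - x i = - (2^-1 *: (P i *m (x i - x (Defs.prev i)))).
  by rewrite /step addrAC subrr add0r.
split=> [i|c c_fix]; first by rewrite incrE mulmxN -scalemxAr mulmxA P_idem.
rewrite dot_sumr; under eq_bigr do rewrite incrE dotC dotNl dotZl dotC.
by rewrite sumrN -mulr_sumr dot_fixed_sum_cycle // mulr0 oppr0.
Qed.

Lemma sqnorm_sub_ord0_le u i : sqnorm (u i - u ord0) <= 4 ^+ m * disagreement u.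
Proof.
have D_ge0 := disagreement_ge0 u.
suff chain l : (l < m.+1)%N -> sqnorm (u (inord l) - u ord0) <= 4 ^+ l * disagreement u.
  rewrite -(inord_val i); apply: le_trans (chain _ (ltn_ord i)) _.
  by rewrite ler_wpM2r // ler_eXn2l ?ltr1n // -ltnS.
elim: l => [_|l IH l_lt].
  have -> : inord 0 = ord0 :> 'I_m.+1 by apply: val_inj; rewrite /= inordK.
  by rewrite subrr /sqnorm dot0r expr0 mul1r.
have prev_l : Defs.prev (inord l.+1 : 'I_m.+1) = inord l.
  by apply: val_inj; rewrite /= !inordK ?addSn /= ?modnDr ?modn_small // ltnW.
rewrite -(subrK (u (inord l)) (u (inord l.+1))) -addrA -{1}prev_l.
apply: le_trans (sqnormD_le _ _) _.
have := sqnorm_le_disagreement u (inord l.+1); have := IH (ltnW l_lt).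
have : 1 <= (4 : R) ^+ l by apply: exprn_ege1; rewrite ler1n.
rewrite exprS; nra.
Qed.

Lemma sqnorm_sum_sub_le u i :
  sqnorm (\sum_j (u j - u i)) <= N ^+ 2 * 4 ^+ m.+1 * disagreement u.
Proof.
have term j : sqnorm (u j - u i) <= 4 ^+ m.+1 * disagreement u.
  have -> : u j - u i = (u j - u ord0) - (u i - u ord0) by rewrite opprB addrA subrK.
  apply: le_trans (sqnormB_le _ _) _.
  have := sqnorm_sub_ord0_le u i; have := sqnorm_sub_ord0_le u j.
  rewrite exprS; lra.
apply: le_trans (sqnorm_sum_le _) _; rewrite card_ord expr2 -!mulrA ler_wpM2l //.
apply: le_trans (ler_sum _ (fun j _ => term j)) _.
by rewrite sumr_const card_ord mulr_natl.
Qed.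

Lemma sqnorm_compl_sum_le u i : in_ranges u ->
  sqnorm ((1%:M - P i) *m \sum_j u j) <= N ^+ 2 * 4 ^+ m.+1 * disagreement u.
Proof.
move=> u_rng; apply: le_trans (sqnorm_sum_sub_le u i).
have -> : \sum_j u j = \sum_j (u j - u i) + N *: u i.
  by rewrite sumrB sumr_const card_ord scaler_nat subrK.
have Q_ui : (1%:M - P i) *m u i = 0 by rewrite mulmxBl mul1mx u_rng subrr.
rewrite mulmxDr -scalemxAr Q_ui scaler0 addr0.
exact: sqnorm_proj_compl_le (P_sym i) (P_idem i) _.
Qed.

Lemma energy_le_disagreement :
  exists K : R, 0 <= K /\ forall u, admissible u -> energy u <= K * disagreement u.
Proof.
have [K [K_ge0 coercive]] := ker_orth_coercive_family (fun i : 'I_m.+1 => 1%:M - P i).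
have N_ge0 : 0 <= N by rewrite ler0n.
set W := N ^+ 2 * 4 ^+ m.+1.
have W_ge0 : 0 <= W by rewrite mulr_ge0 ?exprn_ge0.
exists (N * (2 * (K * (N * W)) + 2 * W)); split.
  by rewrite mulr_ge0 ?addr_ge0 ?mulr_ge0 ?exprn_ge0.
move=> u [u_rng u_orth]; set D := disagreement u; set s := \sum_j u j.
have D_ge0 : 0 <= D := disagreement_ge0 u.
have s_le : sqnorm s <= K * (N * (W * D)).
  apply: le_trans (coercive s _) _.
    move=> k k_fix; apply: u_orth => i; apply/esym/subr0_eq.
    by rewrite -[k in k - _]mul1mx -mulmxBl k_fix.
  rewrite ler_wpM2l //.
  apply: le_trans (ler_sum _ (fun i _ => sqnorm_compl_sum_le i u_rng)) _.
  by rewrite sumr_const card_ord mulr_natl.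
have ui_le i : sqnorm (u i) <= 2 * sqnorm s + 2 * (W * D).
  apply: le_trans (_ : sqnorm (N *: u i) <= _).
    by rewrite sqnormZ ler_peMl ?sqnorm_ge0 // exprn_ege1 // ler1n.
  have -> : N *: u i = s - \sum_j (u j - u i).
    by rewrite sumrB sumr_const card_ord scaler_nat opprB addrC subrK.
  apply: le_trans (sqnormB_le _ _) _.
  by have := sqnorm_sum_sub_le u i; rewrite -/W -/D; lra.
apply: le_trans (ler_sum _ (fun i _ => ui_le i)) _.
rewrite sumr_const card_ord -(mulr_natl (2 * sqnorm s + 2 * (W * D))).
have := ler_wpM2l N_ge0 s_le; nra.
Qed.

Lemma energy_step_contraction : exists rho : R, 0 <= rho /\ rho < 1 /\
  forall u, admissible u -> energy (step u) <= rho ^+ 2 * energy u.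
Proof.
have [K [K_ge0 coercive]] := energy_le_disagreement.
(* [E (step u) <= E - D/8 <= (1 - a) E <= (1 - a/2)^2 E] where [a (K + 1) = 1/8]. *)
pose a := 8^-1 / (K + 1).
have aK : a * (K + 1) = 8^-1 by rewrite /a divfK // lt0r_neq0 //; lra.
have a_gt0 : 0 < a by rewrite /a divr_gt0 //; lra.
have a_le1 : a <= 1 by nra.
exists (1 - a / 2); do !split; try lra.
move=> u u_adm; set E := energy u; set D := disagreement u.
have E_ge0 : 0 <= E := energy_ge0 u.
have D_ge0 : 0 <= D := disagreement_ge0 u.
have aE : a * E <= 8^-1 * D.
  rewrite -aK -mulrA ler_wpM2l ?(ltW a_gt0) //.
  by have := coercive u u_adm; rewrite -/E -/D; nra.
have := energy_step_le u_adm.1; rewrite -/E -/D.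
have := mulr_ge0 (sqr_ge0 a) E_ge0; nra.
Qed.

Definition increment x0 t : 'I_m.+1 -> 'cV[R]_n :=
  iter t step (fun i => step x0 i - x0 i).

Lemma incrementE x0 t i : increment x0 t i = traj C x0 t.+1 i - traj C x0 t i.
Proof.
elim: t i => [//|t IH] i.
rewrite (stepB (traj C x0 t.+1) (traj C x0 t)) /increment iterS.
by apply: step_ext => j; rewrite -IH.
Qed.

Lemma admissible_increment_traj x0 t : admissible (increment x0 t).
Proof.
by elim: t => [|t IH]; [apply: admissible_increment | apply: admissible_step].
Qed.

Lemma increment_geometric x0 : exists c rho : R, 0 < c /\ 0 <= rho /\ rho < 1 /\
  forall t i k, `|traj C x0 t.+1 i k 0 - traj C x0 t i k 0| <= c * rho ^+ t.
Proof.
have [rho [rho_ge0 [rho_lt1 contract]]] := energy_step_contraction.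
set E0 := energy (increment x0 0).
have E0_ge0 : 0 <= E0 := energy_ge0 _.
have decay t : energy (increment x0 t) <= E0 * (rho ^+ t) ^+ 2.
  elim: t => [|t IH]; first by rewrite expr0 expr1n mulr1.
  apply: le_trans (contract _ (admissible_increment_traj x0 t)) _.
  by rewrite [rho ^+ t.+1]exprS exprMn mulrCA ler_wpM2l ?sqr_ge0.
exists (1 + E0), rho; do !split => //; first lra.
move=> t i k; apply: norm_le_of_sqr_le => //; first exact: exprn_ge0.
have := sqr_entry_le_sqnorm (increment x0 t i) k; rewrite {1}incrementE !mxE.
by move/le_trans; apply; apply: le_trans (sqnorm_le_energy _ i) (decay t).
Qed.

Lemma traj_limit x0 : exists (y : 'I_m.+1 -> 'cV[R]_n) (c rho : R),
  0 < c /\ 0 <= rho /\ rho < 1 /\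
  forall t i k, `|traj C x0 t i k 0 - y i k 0| <= c * rho ^+ t.
Proof.
have [c [rho [c_gt0 [rho_ge0 [rho_lt1 dx]]]]] := increment_geometric x0.
have [l l_lim] := geometric_cauchy_limit_fin
  (a := fun t (ik : 'I_m.+1 * 'I_n) => traj C x0 t ik.1 ik.2 0) rho_ge0 rho_lt1
  (fun t ik => dx t ik.1 ik.2).
exists (fun i => \col_k l (i, k)), (c / (1 - rho)), rho; do !split => //.
  by rewrite divr_gt0 // subr_gt0.
by move=> t i k; rewrite mxE; apply: (l_lim t (i, k)).
Qed.

(* [C i] kills [2 x_i(t+1) - x_i(t) - x_(i-1)(t)], which tends to [y i - y (i-1)]. *)
Lemma limit_consensus x0 (y : 'I_m.+1 -> 'cV[R]_n) c rho : 0 <= rho -> rho < 1 ->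
  (forall t i k, `|traj C x0 t i k 0 - y i k 0| <= c * rho ^+ t) ->
  forall i, C i *m y i = C i *m y (Defs.prev i).
Proof.
move=> rho_ge0 rho_lt1 y_lim i; apply/eqP; rewrite -subr_eq0 -mulmxBr; apply/eqP.
set p := Defs.prev i; pose x := traj C x0.
apply: (@geometric_mulmx_eq0 _ _ _ (C i)
  (fun t => (y i - y p) - (2 *: x t.+1 i - (x t i + x t p))) _ (4 * c) rho) => //.
  move=> t k.
  have e_le s j : `|(y j - x s j) k 0| <= c * rho ^+ s.
    by rewrite !mxE distrC; apply: y_lim.
  have c_ge0 : 0 <= c by have := e_le 0%N i; rewrite expr0 mulr1; apply: le_trans.
  have rho_le : c * rho ^+ t.+1 <= c * rho ^+ t.
    by rewrite ler_wpM2l // exprS ler_piMl ?exprn_ge0 // ltW.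
  move: (e_le t.+1 i) (e_le t i) (e_le t p) rho_le.
  move: (x t.+1 i) (x t i) (x t p) => a b d; rewrite !mxE !ler_norml.
  by move=> /andP[? ?] /andP[? ?] /andP[? ?] ?; apply/andP; split; lra.
by move=> t; rewrite !mulmxBr mulmx_step subrr subr0.
Qed.

End CyclicConsensus.

Theorem theorem7 (R : realType) (m n : nat) (r : 'I_m -> nat)
  (C : forall i : 'I_m, 'M[R]_(r i, n)) :
  (2 <= m)%N ->
  (forall i, row_free (C i)) ->
  well_configured C ->
  forall x0 : 'I_m -> 'cV[R]_n,
  exists xstar : 'cV[R]_n, exists c rho : R,
    0 < c /\ 0 <= rho /\ rho < 1 /\
    forall (i : 'I_m) (t : nat) (k : 'I_n),
      `|traj C x0 t i k 0 - xstar k 0| <= c * rho ^+ t.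
Proof.
case: m r C => [//|m] r C _ C_free wc x0.
have [y [c [rho [c_gt0 [rho_ge0 [rho_lt1 y_lim]]]]]] := traj_limit C_free x0.
have y_const := wc y (limit_consensus C_free rho_ge0 rho_lt1 y_lim).
exists (y ord0), c, rho; split=> //; split=> //; split=> // i t k.
by rewrite (y_const ord0 i); apply: y_lim.
Qed.
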